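(* Let $S\neq\mathbb N$ be a numerical semigroup with cyclotomic exponent sequence $\mathbf e$. Then every $d\in\mathcal E(S)$ satisfies $\mathfrak d(d)\ge2$. Moreover, if $\alpha$ is a minimal element of $(\mathcal E(S),\le_S)$, then $e_\alpha=\mathfrak d(\alpha)-1$.
   Context: A numerical semigroup $S$ is a submonoid of $(\mathbb N,+)$ with finite complement, with minimal generating set $A=\{n_1,\dots,n_e\}$. The cyclotomic exponent sequence is the unique integer sequence $(e_j)_{j\ge1}$ with $(1-x)\sum_{s\in S}x^s=\prod_{j\ge1}(1-x^j)^{e_j}$ in $\mathbb Z[[x]]$; $\mathcal E(S)=\{d\in\mathbb N: d\ge2,\ e_d\ne0,\ d\notin A\}$. Write $a\le_S b$ if $b-a\in S$. With $\varphi:\mathbb N^e\to S$, $\varphi(a)=\sum_ia_in_i$, the denumerant of $s\in S$ is $\mathfrak d(s)=|\varphi^{-1}(s)|$, the number of factorizations of $s$. *)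

From mathcomp Require Import all_boot all_order all_algebra.
Set Implicit Arguments. Unset Strict Implicit. Unset Printing Implicit Defensive.
Import GRing.Theory Num.Theory.
Local Open Scope ring_scope.

Definition numerical_semigroup (S : pred nat) : Prop :=
  [/\ S 0%N,
      (forall a b, S a -> S b -> S (a + b)%N) &
      exists N : nat, forall n, (N <= n)%N -> S n].

Definition nat_comb (A : seq nat) (s : nat) : Prop :=
  exists c : nat -> nat, s = (\sum_(i < size A) c i * nth 0%N A i)%N.

Definition generates (A : seq nat) (S : pred nat) : Prop :=
  forall s, S s <-> nat_comb A s.

Definition min_gen_set (S : pred nat) (A : seq nat) : Prop :=
  [/\ uniq A, generates A S &
      forall B : seq nat, {subset B <= A} -> generates B S -> {subset A <= B}].

(* Denumerant of s w.r.t. the generators A = (n_1,...,n_e): the number of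
   a in N^e with sum_i a_i n_i = s.  Since every n_i >= 1 (0 is never a
   minimal generator), each such a_i is <= s, so the set of factorizations
   is exactly the following finite set. *)
Definition denumerant (A : seq nat) (s : nat) : nat :=
  #|[set a : {ffun 'I_(size A) -> 'I_s.+1}
       | (\sum_(i < size A) (a i : nat) * nth 0%N A i)%N == s]|.

Definition ps := nat -> int.
Definition ps1 : ps := fun n => ((n == 0%N) : nat)%:Z.
Definition psmul (f g : ps) : ps :=
  fun n => \sum_(i < n.+1) f i * g (n - i)%N.
Definition pspow (f : ps) (m : nat) : ps := iter m (psmul f) ps1.
Definition one_minus_xpow (j : nat) : ps :=
  fun n => ((n == 0%N) : nat)%:Z - ((n == j) : nat)%:Z.
(* (1 - x^j)^{-1} = sum_k x^{jk}  (for j >= 1) *)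
Definition geom_xpow (j : nat) : ps :=
  fun n => ((j %| n)%N : nat)%:Z.
(* (1 - x^j)^e for e in Z, j >= 1 *)
Definition cyc_factor (j : nat) (e : int) : ps :=
  match e with
  | Posz m => pspow (one_minus_xpow j) m
  | Negz m => pspow (geom_xpow j) m.+1
  end.
(* Coefficients of the (x-adically convergent) infinite product
   prod_{j>=1} (1 - x^j)^{e_j}: the factors with j > n are = 1 mod x^{n+1},
   so the n-th coefficient is that of the finite product over 1 <= j <= n. *)
Definition cyc_product (e : nat -> int) : ps :=
  fun n => (\big[psmul/ps1]_(1 <= j < n.+1) cyc_factor j (e j)) n.

Definition hilb (S : pred nat) : ps := fun n => (S n : nat)%:Z.

(* e is the cyclotomic exponent sequence of S (e 0 is irrelevant):
   (1 - x) * sum_{s in S} x^s = prod_{j>=1} (1 - x^j)^{e_j} in Z[[x]]. *)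
Definition cyc_exp_seq (S : pred nat) (e : nat -> int) : Prop :=
  forall n, psmul (one_minus_xpow 1) (hilb S) n = cyc_product e n.

Definition in_E (A : seq nat) (e : nat -> int) (d : nat) : Prop :=
  [/\ (2 <= d)%N, e d != 0 & d \notin A].

Definition leS (S : pred nat) (a b : nat) : Prop := (a <= b)%N /\ S (b - a)%N.

Definition minimal_in_E (S : pred nat) (A : seq nat) (e : nat -> int) (x : nat) : Prop :=
  in_E A e x /\ forall y, in_E A e y -> leS S y x -> y = x.

From mathcomp Require Import all_boot all_order all_algebra.
From mathcomp Require Import zify ring.
From Stdlib Require Import Classical.
Import GRing.Theory Num.Theory.
Set Implicit Arguments. Unset Strict Implicit.
Local Open Scope ring_scope.

(* Proof of Lemma 4.5.  Let H = sum_(s in S) x^s be the Hilbert series of S,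
   D = prod_(a in A) 1/(1 - x^a) the generating series of the denumerant, and
   f_j = e_j + [j in A] - [j = 1].  The defining identity of the cyclotomic
   exponents, (1 - x) H = prod_j (1 - x^j)^(e_j), rearranges into

              H * G = D,      G = prod_(j >= 1) (1 - x^j)^(-f_j).

   Series are handled as integer polynomials truncated at a degree N, and
   (1 - x^j)^k for negative k as a power of a truncated geometric series.
   1. H and D are supported on S with constant term 1, hence so is G = D / H.
   2. By strong induction, every j > 0 with f_j <> 0 lies in S and is not a
      generator: the coefficient of x^j in G is f_j plus a contribution of
      the smaller factors, which is controlled by the induction hypothesis and
      the irreducibility of generators.  So {j : f_j <> 0} = E(S), f = e there.
   3. For a <=_S-minimal alpha in E(S), comparing coefficients of x^alpha in
      H * G = D gives d(alpha) = 1 + e_alpha.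
   4. Each d in E(S) lies <=_S-above such an alpha, and the denumerant is
      <=_S-monotone, so d(d) >= d(alpha) = 1 + e_alpha >= 2. *)

(* Truncation of an integer polynomial at degree N, i.e. reduction mod x^(N+1);
   formal power series are only ever compared through such truncations. *)
Definition cut (N : nat) (p : {poly int}) : {poly int} := \poly_(i < N.+1) p`_i.

Lemma coef_cut N p i : (cut N p)`_i = if (i <= N)%N then p`_i else 0.
Proof. by rewrite coef_poly ltnS. Qed.

Lemma cutP N p q : cut N p = cut N q <-> forall i, (i <= N)%N -> p`_i = q`_i.
Proof.
split=> [E i Hi | E]; first by have := congr1 (fun r : {poly int} => r`_i) E; rewrite !coef_cut Hi.
by apply/polyP => i; rewrite !coef_cut; case: ifP => // /E.
Qed.

Lemma cut1 N : cut N 1 = 1.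
Proof. by apply/polyP => i; rewrite coef_cut coef1; case: ifP => //; case: i. Qed.

Lemma cut_mull N p q : cut N (cut N p * q) = cut N (p * q).
Proof.
apply/cutP => i Hi; rewrite !coefM; apply: eq_bigr => j _.
by rewrite coef_cut (leq_trans (leq_ord j) Hi).
Qed.

Lemma cut_mulr N p q : cut N (p * cut N q) = cut N (p * q).
Proof. by rewrite mulrC cut_mull mulrC. Qed.

Lemma cut_mulE N p q p' q' : cut N p = cut N p' -> cut N q = cut N q' ->
  cut N (p * q) = cut N (p' * q').
Proof. by move=> Ep Eq; rewrite -cut_mull Ep cut_mull -cut_mulr Eq cut_mulr. Qed.

Lemma cut_mul1 N p q : cut N q = 1 -> cut N (p * q) = cut N p.
Proof. by move=> Eq; rewrite -cut_mulr Eq mulr1. Qed.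

Lemma cut_exp N p q m : cut N p = cut N q -> cut N (p ^+ m) = cut N (q ^+ m).
Proof. by move=> E; elim: m => [|m IH]; rewrite ?expr0 // !exprS; apply: cut_mulE. Qed.

Lemma cut_prodE N (I : Type) (r : seq I) (P : pred I) (F G : I -> {poly int}) :
  (forall i, P i -> cut N (F i) = cut N (G i)) ->
  cut N (\prod_(i <- r | P i) F i) = cut N (\prod_(i <- r | P i) G i).
Proof. by move=> E; elim/big_rec2: _ => // i x y Pi IH; apply: cut_mulE => //; apply: E. Qed.

Lemma cut_prod1 N (I : Type) (r : seq I) (P : pred I) (F : I -> {poly int}) :
  (forall i, P i -> cut N (F i) = 1) -> cut N (\prod_(i <- r | P i) F i) = 1.
Proof.
move=> E; elim/big_rec: _ => [|i x Pi IH]; first exact: cut1.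
by rewrite -cut_mull E // mul1r.
Qed.

Lemma cut_prodE_nat N a b (F G : nat -> {poly int}) :
  (forall i, (a <= i < b)%N -> cut N (F i) = cut N (G i)) ->
  cut N (\prod_(a <= i < b) F i) = cut N (\prod_(a <= i < b) G i).
Proof.
by move=> E; rewrite big_nat_cond [in RHS]big_nat_cond; apply: cut_prodE => i /andP[/E].
Qed.

Lemma cut_prod1_nat N a b (F : nat -> {poly int}) :
  (forall i, (a <= i < b)%N -> cut N (F i) = 1) -> cut N (\prod_(a <= i < b) F i) = 1.
Proof. by move=> E; rewrite big_nat_cond; apply: cut_prod1 => i /andP[/E]. Qed.

Definition supported (N : nat) (P : nat -> Prop) (p : {poly int}) : Prop :=
  forall i, (i <= N)%N -> p`_i != 0 -> P i.

Definition addclosed (P : nat -> Prop) : Prop := forall m n, P m -> P n -> P (m + n)%N.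

Lemma supported_coef0 N P p i : supported N P p -> (i <= N)%N -> ~ P i -> p`_i = 0.
Proof. by move=> Hp Hi nP; apply/eqP; apply: contraT => /(Hp _ Hi). Qed.

Lemma supported_sub N (P Q : nat -> Prop) p :
  (forall i, P i -> Q i) -> supported N P p -> supported N Q p.
Proof. by move=> PQ Hp i Hi /(Hp _ Hi)/PQ. Qed.

Lemma supported_cut N P p q : cut N p = cut N q -> supported N P p -> supported N P q.
Proof.
move=> /cutP E Hp i Hi; rewrite -E //; exact: Hp.
Qed.

Lemma supported1 N (P : nat -> Prop) : P 0%N -> supported N P 1.
Proof. by move=> P0 [|i] _; rewrite coef1. Qed.

Lemma supported_mul N P p q : addclosed P ->
  supported N P p -> supported N P q -> supported N P (p * q).
Proof.
move=> HP Hp Hq i Hi; rewrite coefM => /eqP nz; apply: NNPP => nPi; apply: nz.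
apply: big1 => j _; have Hj := leq_ord j.
have [->|pj] := eqVneq p`_j 0; first by rewrite mul0r.
have [->|qj] := eqVneq q`_(i - j) 0; first by rewrite mulr0.
case: nPi; rewrite -(subnKC Hj); apply: HP; [apply: Hp pj | apply: Hq qj]; lia.
Qed.

Lemma supported_prod N (P : nat -> Prop) (I : Type) (r : seq I) (Q : pred I) F :
  P 0%N -> addclosed P -> (forall i, Q i -> supported N P (F i)) ->
  supported N P (\prod_(i <- r | Q i) F i).
Proof.
move=> P0 HP HF; elim/big_rec: _ => [|i x Qi IH]; first exact: supported1.
by apply: supported_mul => //; apply: HF.
Qed.

Lemma coef_mul_ends (p q : {poly int}) n : (0 < n)%N ->
  (forall k, (0 < k < n)%N -> p`_k * q`_(n - k) = 0) ->
  (p * q)`_n = p`_n * q`_0 + p`_0 * q`_n.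
Proof.
case: n => // n _ Hmid; rewrite coefM big_ord_recr big_ord_recl /= subnn subn0.
rewrite big1 ?addr0 => [|i _]; first exact: addrC.
apply: Hmid; have := ltn_ord i; rewrite /bump /=; lia.
Qed.

(* Multiples of j; series in x^j are supported there, so their products
   have coefficients of x^0 and x^j computed as for linear polynomials. *)
Definition multiples (j : nat) : nat -> Prop := fun i => (j %| i)%N.

Lemma multiples_addclosed j : addclosed (multiples j).
Proof. by move=> m n; apply: dvdn_add. Qed.

Lemma coef_mul_multiples N j (p q : {poly int}) : (0 < j <= N)%N ->
  supported N (multiples j) q -> (p * q)`_j = p`_j * q`_0 + p`_0 * q`_j.
Proof.
move=> /andP[j0 jN] Hq; apply: coef_mul_ends => // k /andP[k0 kj].
rewrite (supported_coef0 Hq) ?mulr0 //; first lia.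
by move/dvdn_leq; lia.
Qed.

Lemma supported_exp N (P : nat -> Prop) p m :
  P 0%N -> addclosed P -> supported N P p -> supported N P (p ^+ m).
Proof.
move=> P0 HP Hp; elim: m => [|m IH]; first exact: supported1.
by rewrite exprS; apply: supported_mul.
Qed.

Lemma coef0_exp (p : {poly int}) m : p`_0 = 1 -> (p ^+ m)`_0 = 1.
Proof. by move=> p0; elim: m => [|m IH]; rewrite ?coef1 // exprS coef0M p0 IH mul1r. Qed.

Lemma coef_exp_multiples N j (p : {poly int}) m : (0 < j <= N)%N ->
  supported N (multiples j) p -> p`_0 = 1 -> (p ^+ m)`_j = p`_j *+ m.
Proof.
move=> Hj Hp p0; elim: m => [|m IH].
  by rewrite expr0 coef1 mulr0n; case/andP: Hj; case: (j).
by rewrite exprSr (coef_mul_multiples _ Hj Hp) IH p0 coef0_exp // mulr1 mul1r mulrSr.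
Qed.

Definition geom (N j : nat) : {poly int} := \sum_(v < N.+1) 'X^(v * j).

Lemma coef_geom N j i : (0 < j)%N -> (i <= N)%N -> (geom N j)`_i = ((j %| i)%N : nat)%:Z.
Proof.
move=> j0 iN; rewrite coef_sum; under eq_bigr => v _ do rewrite coefXn.
have [/dvdnP[k Ei] | ndiv] := boolP (j %| i)%N; last first.
  by apply: big1 => v _; case: eqP => // Ei; case/negP: ndiv; rewrite Ei dvdn_mull.
subst i; have kN : (k < N.+1)%N by have := leq_pmulr k j0; lia.
rewrite (bigD1 (Ordinal kN)) //= eqxx big1 ?addr0 // => v nev.
by rewrite eqn_pmul2r //; case: eqP => // Evk; case/eqP: nev; apply: val_inj.
Qed.

Lemma supported_geom M N j : supported M (multiples j) (geom N j).
Proof.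
move=> i _; rewrite coef_sum /multiples; apply: contraNT => ndiv; apply/eqP.
by apply: big1 => v _; rewrite coefXn; case: eqP => // Ei; case/negP: ndiv; rewrite Ei dvdn_mull.
Qed.

Lemma supported_onem N j : supported N (multiples j) (1 - 'X^j).
Proof.
move=> i _; rewrite coefB coef1 coefXn /multiples.
have [->|_] := eqVneq i 0%N; first by rewrite dvdn0.
by have [->|_] := eqVneq i j; rewrite ?dvdnn ?subrr ?eqxx.
Qed.

Lemma coef0_onem j : (0 < j)%N -> (1 - 'X^j : {poly int})`_0 = 1.
Proof. by rewrite coefB coef1 coefXn; case: j. Qed.

Lemma geom_inv N j : (0 < j)%N -> cut N ((1 - 'X^j) * geom N j) = 1.
Proof.
move=> j0; apply/polyP => i; rewrite coef_cut coef1.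
case: ifP => iN; last by case: i iN.
rewrite mulrBl mul1r coefB mulrC coefMXn coef_geom //.
case: ltnP => ji; first by rewrite subr0; case: i ji {iN} => [|i] ji; rewrite ?dvdn0 ?gtnNdvd.
rewrite coef_geom ?dvdn_subl ?subrr; try lia.
by case: i ji {iN} => // ; rewrite leqn0 => /eqP j00; rewrite j00 in j0.
Qed.

(* (1 - x^j)^k for k : int, valid modulo x^(N+1): negative powers are
   powers of the truncated geometric series. *)
Definition cpow (N j : nat) (k : int) : {poly int} :=
  match k with Posz m => (1 - 'X^j) ^+ m | Negz m => geom N j ^+ m.+1 end.

(* Every cpow is a product (1 - x^j)^a geom^b with k = a - b, and modulo
   x^(N+1) only a - b matters; hence the exponent law for cpow. *)
Lemma cpow_repr N j k : exists a b,
  cpow N j k = (1 - 'X^j) ^+ a * geom N j ^+ b /\ k = Posz a - Posz b.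
Proof.
case: k => m; first by exists m, 0%N; rewrite expr0 mulr1 subr0.
by exists 0%N, m.+1; rewrite expr0 mul1r sub0r NegzE.
Qed.

Lemma cpow_normal N j a b : (0 < j)%N ->
  cut N ((1 - 'X^j) ^+ a * geom N j ^+ b) = cut N (cpow N j (Posz a - Posz b)).
Proof.
move=> j0; elim: b a => [|b IH] [|a]; rewrite ?expr0 ?mulr1 ?mul1r ?subr0 ?sub0r //.
have -> : (1 - 'X^j) ^+ a.+1 * geom N j ^+ b.+1 =
   ((1 - 'X^j) ^+ a * geom N j ^+ b) * ((1 - 'X^j) * geom N j) by rewrite !exprS; ring.
by rewrite cut_mul1 ?geom_inv // IH; congr (cut N (cpow N j _)); lia.
Qed.

Lemma cpowD N j k1 k2 : (0 < j)%N ->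
  cut N (cpow N j k1 * cpow N j k2) = cut N (cpow N j (k1 + k2)).
Proof.
move=> j0; have [a1 [b1 [-> ->]]] := cpow_repr N j k1.
have [a2 [b2 [-> ->]]] := cpow_repr N j k2.
have -> : (1 - 'X^j) ^+ a1 * geom N j ^+ b1 * ((1 - 'X^j) ^+ a2 * geom N j ^+ b2)
   = (1 - 'X^j) ^+ (a1 + a2) * geom N j ^+ (b1 + b2) by rewrite !exprD; ring.
by rewrite cpow_normal //; congr (cut N (cpow N j _)); lia.
Qed.

Lemma supported_cpow M N j k : supported M (multiples j) (cpow N j k).
Proof.
have [a [b [-> _]]] := cpow_repr N j k.
have P0 : multiples j 0 := dvdn0 j.
have HP : addclosed (multiples j) := @multiples_addclosed j.
by apply: supported_mul => //; apply: supported_exp => //;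
  [exact: supported_onem | exact: supported_geom].
Qed.

Lemma coef0_cpow N j k : (0 < j)%N -> (cpow N j k)`_0 = 1.
Proof.
move=> j0; have [a [b [-> _]]] := cpow_repr N j k.
by rewrite coef0M !coef0_exp ?coef0_onem ?coef_geom ?dvdn0 ?mulr1.
Qed.

Lemma coef_cpow N j k : (0 < j <= N)%N -> (cpow N j k)`_j = - k.
Proof.
move=> Hj; have /andP[j0 _] := Hj; have [a [b [-> ->]]] := cpow_repr N j k.
have g0 : (geom N j)`_0 = 1 by rewrite coef_geom ?dvdn0.
have supp_gb : supported N (multiples j) (geom N j ^+ b).
  by apply: supported_exp; [exact: dvdn0 | exact: multiples_addclosed | exact: supported_geom].
rewrite (coef_mul_multiples _ Hj supp_gb).
rewrite !(coef_exp_multiples _ Hj) ?coef0_exp ?coef0_onem //;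
  [|exact: supported_onem|exact: supported_geom].
rewrite coef_geom ?dvdnn //; last by case/andP: Hj.
rewrite coefB coef1 coefXn eqxx; case: (j) j0 => // ? _ /=; lia.
Qed.


Definition poly_of (N : nat) (f : ps) : {poly int} := \poly_(i < N.+1) f i.

Lemma coef_poly_of N f i : (poly_of N f)`_i = if (i <= N)%N then f i else 0.
Proof. by rewrite coef_poly ltnS. Qed.

Lemma psmul_coef N (f g : ps) (q : {poly int}) n : (n <= N)%N ->
  (forall i, (i <= N)%N -> g i = q`_i) -> psmul f g n = (poly_of N f * q)`_n.
Proof.
move=> nN Eg; rewrite coefM; apply: eq_bigr => j _.
have jN : (j <= N)%N by have := leq_ord j; lia.
by rewrite coef_poly_of jN Eg //; lia.
Qed.

Lemma big_psmul_coef N (r : seq nat) (F : nat -> ps) n : (n <= N)%N ->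
  (\big[psmul/ps1]_(j <- r) F j) n = (\prod_(j <- r) poly_of N (F j))`_n.
Proof.
elim: r n => [|x r IH] n nN; first by rewrite !big_nil coef1 natz.
by rewrite !big_cons; apply: psmul_coef => // i iN; apply: IH.
Qed.

Lemma pspow_coef N f m n : (n <= N)%N -> pspow f m n = (poly_of N f ^+ m)`_n.
Proof.
elim: m n => [|m IH] n nN; first by rewrite expr0 coef1 /pspow /= /ps1 natz.
by rewrite exprS /pspow iterS; apply: psmul_coef => // i iN; apply: IH.
Qed.

Lemma poly_of_onem N j : cut N (poly_of N (one_minus_xpow j)) = cut N (1 - 'X^j).
Proof. by apply/cutP => i iN; rewrite coef_poly_of iN coefB coef1 coefXn !natz. Qed.

Lemma cyc_factor_coef N j k n : (0 < j)%N -> (n <= N)%N ->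
  cyc_factor j k n = (cpow N j k)`_n.
Proof.
move=> j0 nN; case: k => m; rewrite /cyc_factor (pspow_coef _ _ nN).
  by move/cutP: (cut_exp m (poly_of_onem N j)); apply.
have Eg : cut N (poly_of N (geom_xpow j)) = cut N (geom N j).
  by apply/cutP => i iN; rewrite coef_poly_of iN coef_geom.
by move/cutP: (cut_exp m.+1 Eg); apply.
Qed.

Lemma cut_cpow_large n N j k : (n < j)%N -> cut n (cpow N j k) = 1.
Proof.
move=> nj; apply/polyP => -[|i]; rewrite coef_cut coef1 /=; first by rewrite coef0_cpow //; lia.
case: ifP => // iN; apply: (supported_coef0 (@supported_cpow n N j k)) => // /dvdn_leq; lia.
Qed.

Lemma cyc_exp_seq_cut S e N : cyc_exp_seq S e ->
  cut N ((1 - 'X^1) * poly_of N (hilb S)) = cut N (\prod_(1 <= j < N.+1) cpow N j (e j)).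
Proof.
move=> He; apply/cutP => n nN.
have -> : ((1 - 'X^1) * poly_of N (hilb S))`_n = psmul (one_minus_xpow 1) (hilb S) n.
  rewrite (@psmul_coef N _ _ (poly_of N (hilb S))) => [|//|i iN]; last by rewrite coef_poly_of iN.
  by move/cutP: (cut_mulE (poly_of_onem N 1) (erefl (cut N (poly_of N (hilb S))))) => ->.
rewrite He /cyc_product (big_psmul_coef _ _ (leqnn n)).
have Elow : cut n (\prod_(1 <= j < n.+1) poly_of n (cyc_factor j (e j))) =
            cut n (\prod_(1 <= j < n.+1) cpow N j (e j)).
  apply: cut_prodE_nat => j /andP[j0 _]; apply/cutP => i iN.
  by rewrite coef_poly_of iN (@cyc_factor_coef N) // (leq_trans iN nN).
have Ehigh : cut n (\prod_(1 <= j < N.+1) cpow N j (e j)) =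
             cut n (\prod_(1 <= j < n.+1) cpow N j (e j)).
  rewrite (big_cat_nat (n := n.+1)) //= cut_mul1 //.
  by apply: cut_prod1_nat => j /andP[nj _]; apply: cut_cpow_large.
by move/cutP: Elow => ->//; move/cutP: Ehigh => ->.
Qed.

Definition Dser (A : seq nat) (N : nat) : {poly int} :=
  \prod_(i < size A) geom N (nth 0%N A i).

Lemma XnE (I : finType) (F : I -> nat) :
  ('X^(\sum_i F i) : {poly int}) = \prod_i 'X^(F i).
Proof. by apply: (big_morph (fun n => 'X^n)) => [m n|]; rewrite ?exprD ?expr0. Qed.

Lemma denumerant_coef A s : Posz (denumerant A s) = (Dser A s)`_s.
Proof.
rewrite /Dser /geom bigA_distr_bigA /= coef_sum.
under eq_bigr => f _ do rewrite -XnE coefXn.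
rewrite -natr_sum /denumerant -sum1dep_card natz; congr Posz.
by rewrite big_mkcond /=; apply: eq_bigr => f _; rewrite eq_sym; case: eqP.
Qed.

Lemma Dser_range A N : uniq A -> (forall x, x \in A -> 0 < x)%N ->
  cut N (Dser A N) = cut N (\prod_(1 <= j < N.+1 | j \in A) geom N j).
Proof.
move=> uA Apos; rewrite /Dser -(big_mkord xpredT (fun i => geom N (nth 0%N A i))).
rewrite -(big_nth 0%N xpredT (geom N)) (bigID (fun x => x <= N)%N) /= cut_mul1; last first.
  apply: cut_prod1 => x; rewrite -ltnNge => /(@cut_cpow_large N N x (Negz 0)).
  by rewrite /cpow expr1.
rewrite -[X in cut N X = _]big_filter -[X in _ = cut N X]big_filter.
congr (cut N _); apply: perm_big; apply: uniq_perm; rewrite ?filter_uniq ?iota_uniq //.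
move=> x; rewrite !mem_filter mem_index_iota.
by case: (boolP (x \in A)) => xA; rewrite ?andbF //= andbT; have := Apos x xA; lia.
Qed.

Definition fexp (A : seq nat) (e : nat -> int) (j : nat) : int :=
  e j + Posz (j \in A) - Posz (j == 1%N).

Definition Gser (A : seq nat) (e : nat -> int) (N : nat) : {poly int} :=
  \prod_(1 <= j < N.+1) cpow N j (- fexp A e j).

Lemma prod_cpow_eq1 N :
  cut N (\prod_(1 <= j < N.+1) cpow N j (Posz (j == 1%N))) = cut N (1 - 'X^1).
Proof.
case: N => [|N]; first by rewrite big_geq //; apply/cutP => -[|i] //; rewrite coefB coef1 coefXn.
rewrite big_ltn // big_nat_cond big1 ?mulr1 /cpow ?expr1 // => j /andP[/andP[j1 _] _].
by rewrite gtn_eqF.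
Qed.

Lemma HGD S A e N : uniq A -> (forall x, x \in A -> 0 < x)%N -> cyc_exp_seq S e ->
  cut N (poly_of N (hilb S) * Gser A e N) = cut N (Dser A N).
Proof.
move=> uA Apos He.
set PE := \prod_(1 <= j < N.+1) cpow N j (- e j).
set PA := \prod_(1 <= j < N.+1) cpow N j (- Posz (j \in A)).
set P1 := \prod_(1 <= j < N.+1) cpow N j (Posz (j == 1%N)).
set PP := \prod_(1 <= j < N.+1) cpow N j (e j).
set H := poly_of N (hilb S).
have EG : cut N (Gser A e N) = cut N (PE * PA * P1).
  rewrite /PE /PA /P1 -!big_split; apply: cut_prodE_nat => j /andP[j0 _].
  rewrite -cut_mull cpowD // cut_mull cpowD //; congr (cut N (cpow N j _)).
  by rewrite /fexp; ring.
have EPE : cut N (PP * PE) = 1.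
  rewrite /PP /PE -big_split; apply: cut_prod1_nat => j /andP[j0 _].
  by rewrite cpowD // subrr cut1.
have EPA : cut N PA = cut N (Dser A N).
  rewrite Dser_range // /PA [in RHS]big_mkcond; congr (cut N _).
  by apply: eq_bigr => j _; case: (j \in A).
have EP1H : cut N (P1 * H) = cut N PP.
  by rewrite (cut_mulE (prod_cpow_eq1 N) (erefl (cut N H))) (cyc_exp_seq_cut N He).
rewrite -cut_mulr EG cut_mulr.
have -> : H * (PE * PA * P1) = (P1 * H) * PE * PA by ring.
have EP1HPE : cut N (P1 * H * PE) = cut N 1.
  by rewrite (cut_mulE EP1H (erefl (cut N PE))) EPE cut1.
by rewrite (cut_mulE EP1HPE (erefl (cut N PA))) mul1r.
Qed.

Definition comb (c : nat -> nat) (l : seq nat) : nat :=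
  (\sum_(i < size l) c i * nth 0%N l i)%N.

Lemma comb_ext c1 c2 l : (forall i, (i < size l)%N -> c1 i = c2 i) -> comb c1 l = comb c2 l.
Proof. by move=> E; apply: eq_bigr => i _; rewrite E. Qed.

Lemma combD c1 c2 l : comb (fun i => c1 i + c2 i)%N l = (comb c1 l + comb c2 l)%N.
Proof. by rewrite /comb -big_split; apply: eq_bigr => i _; rewrite mulnDl. Qed.

Lemma combM k c l : comb (fun i => k * c i)%N l = (k * comb c l)%N.
Proof. by rewrite /comb big_distrr /=; apply: eq_bigr => i _; rewrite mulnA. Qed.

Lemma comb0 l : comb (fun _ => 0%N) l = 0%N.
Proof. by rewrite /comb big1. Qed.

Definition dropc (n : nat) (d : nat -> nat) : nat -> nat :=
  fun i => if (i < n)%N then d i else d i.+1.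
Definition insc (n : nat) (c : nat -> nat) : nat -> nat :=
  fun i => if (i < n)%N then c i else if i == n then 0%N else c i.-1.

Lemma dropc_insc n c : dropc n (insc n c) =1 c.
Proof. by move=> i; rewrite /dropc /insc; case: ltnP => // ni; rewrite !ifN //; lia. Qed.

Lemma comb_cat c l1 l2 :
  comb c (l1 ++ l2) = (comb c l1 + comb (fun i => c (size l1 + i)%N) l2)%N.
Proof.
rewrite /comb size_cat big_split_ord /=; congr (_ + _)%N; apply: eq_bigr => i _.
  by rewrite nth_cat /= ltn_ord.
by rewrite nth_cat /= ltnNge leq_addr /= addKn.
Qed.

Lemma comb_cons c x l : comb c (x :: l) = (c 0%N * x + comb (fun i => c i.+1) l)%N.
Proof. by rewrite /comb /= big_ord_recl. Qed.

Lemma comb_split d l1 x l2 :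
  comb d (l1 ++ x :: l2) = (comb (dropc (size l1) d) (l1 ++ l2) + d (size l1) * x)%N.
Proof.
rewrite !comb_cat comb_cons addn0.
rewrite (@comb_ext (dropc (size l1) d) d l1); last by move=> i il; rewrite /dropc il.
rewrite (@comb_ext (fun i => dropc (size l1) d (size l1 + i)) (fun i => d (size l1 + i).+1) l2);
  last by move=> i _; rewrite /dropc ltnNge leq_addr.
rewrite (@comb_ext (fun i => d (size l1 + i.+1)%N) (fun i => d (size l1 + i).+1) l2) //; first lia.
by move=> i _; rewrite addnS.
Qed.

Lemma one_notin (S : pred nat) : numerical_semigroup S -> (exists n, ~~ S n) -> ~ S 1%N.
Proof.
case=> S0 SD _ [n nSn] S1; case/negP: nSn.
by elim: n => [//|n IH]; rewrite -addn1; apply: SD.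
Qed.

Section Generators.
Variables (S : pred nat) (A : seq nat).
Hypothesis HS : numerical_semigroup S.
Hypothesis HA : min_gen_set S A.

Lemma S0 : S 0%N. Proof. by case: HS. Qed.
Lemma SD m n : S m -> S n -> S (m + n)%N. Proof. by case: HS => _ H _; apply: H. Qed.
Lemma SM k n : S n -> S (k * n)%N.
Proof. by move=> Sn; elim: k => [|k IH]; [exact: S0 | rewrite mulSn; apply: SD]. Qed.

Lemma memS_comb s : S s <-> exists c, s = comb c A.
Proof. by case: HA => _ H _; apply: H. Qed.

Lemma gens_uniq : uniq A. Proof. by case: HA. Qed.

Lemma gen_not_comb l1 x l2 : A = l1 ++ x :: l2 -> ~ exists c, x = comb c (l1 ++ l2).
Proof.
move=> EA [cx Ex]; case: HA => uA Hgen Hmin.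
have sub : {subset l1 ++ l2 <= A}.
  by move=> y; rewrite EA !mem_cat inE => /orP[->|->]; rewrite ?orbT.
have gen' : generates (l1 ++ l2) S.
  move=> s; split.
  - case/Hgen => d ->; rewrite -/(comb d A) EA comb_split Ex -combM -combD.
    by exists (fun i => dropc (size l1) d i + d (size l1) * cx i)%N.
  - case=> c ->; apply/Hgen; exists (insc (size l1) c); rewrite -/(comb _ A) EA comb_split.
    rewrite /insc eqxx ltnn mul0n addn0; apply: comb_ext => i _.
    by have := dropc_insc (size l1) c i; rewrite /insc.
have := Hmin _ sub gen' x; rewrite EA mem_cat inE eqxx orbT => /(_ isT).
move: uA; rewrite EA cat_uniq /= => /and3P[_ xl2 /andP[xl1 _]].
by rewrite mem_cat => /orP[x1|x2]; [rewrite x1 in xl2 | rewrite x2 in xl1].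
Qed.

Lemma gen_split x : x \in A -> exists l1 l2, A = l1 ++ x :: l2.
Proof. by case/splitPr => l1 l2; exists l1, l2. Qed.

Lemma gen_pos x : x \in A -> (0 < x)%N.
Proof.
case/gen_split => l1 [l2 EA]; rewrite lt0n; apply/negP => /eqP x0.
by apply: (gen_not_comb EA); exists (fun=> 0%N); rewrite comb0.
Qed.

Lemma gen_mem x : x \in A -> S x.
Proof.
case/gen_split => l1 [l2 EA]; apply/memS_comb; exists (fun i => (i == size l1 : nat)).
rewrite EA comb_split eqxx mul1n (@comb_ext _ (fun _ => 0%N)) ?comb0 // => i _.
by rewrite /dropc; case: ltngtP => // [h|->]; rewrite gtn_eqF // ltnS ltnW.
Qed.

Lemma gen_irreducible x s t : x \in A -> S s -> S t -> (0 < s)%N -> (0 < t)%N ->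
  x <> (s + t)%N.
Proof.
case/gen_split => l1 [l2 EA] Ss St s0 t0 Ex; apply: (gen_not_comb EA).
have below u : S u -> (u < x)%N -> exists c, u = comb c (l1 ++ l2).
  case/memS_comb => d -> ux; exists (dropc (size l1) d).
  move: ux; rewrite EA comb_split; case: (d (size l1)) => [|k]; rewrite ?mul0n ?addn0 //.
  by rewrite mulSn; lia.
have [c1 E1] : exists c, s = comb c (l1 ++ l2) by apply: below => //; lia.
have [c2 E2] : exists c, t = comb c (l1 ++ l2) by apply: below => //; lia.
by exists (fun i => c1 i + c2 i)%N; rewrite combD -E1 -E2.
Qed.

Lemma coef_le_comb (c : nat -> nat) (i : 'I_(size A)) : (c i <= comb c A)%N.
Proof.
rewrite /comb (bigD1 i) //=; apply: leq_trans (leq_addr _ _).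
by apply: leq_pmulr; apply: gen_pos; apply: mem_nth.
Qed.

Lemma denumerant_pos n : S n -> (0 < denumerant A n)%N.
Proof.
case/memS_comb => c En.
pose f : {ffun 'I_(size A) -> 'I_n.+1} := [ffun i : 'I_(size A) => inord (c i)].
apply/card_gt0P; exists f; rewrite inE; apply/eqP; apply: etrans (esym En).
by apply: eq_bigr => i _; rewrite ffunE inordK // ltnS En coef_le_comb.
Qed.

Lemma denumerant_mono n r : S r -> (denumerant A n <= denumerant A (n + r))%N.
Proof. (* adding a fixed factorization of r injects factorizations of n into those of n + r *)
case/memS_comb => c Er.
have bound (f : {ffun 'I_(size A) -> 'I_n.+1}) i : (f i + c i < (n + r).+1)%N.
  by have := ltn_ord (f i); have := coef_le_comb c i; rewrite -Er; lia.
pose shift (f : {ffun 'I_(size A) -> 'I_n.+1}) : {ffun 'I_(size A) -> 'I_(n + r).+1} :=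
  [ffun i : 'I_(size A) => inord (f i + c i)].
have shift_inj : injective shift.
  move=> f1 f2 /ffunP E; apply/ffunP => i; have := E i; rewrite !ffunE.
  by move/(congr1 val); rewrite /= !inordK ?bound // => /addIn /val_inj.
rewrite /denumerant -(card_imset _ shift_inj); apply: subset_leq_card; apply/subsetP => g.
case/imsetP => f; rewrite inE => /eqP Ef ->; rewrite inE; apply/eqP.
under eq_bigr => i _ do rewrite ffunE inordK ?bound // mulnDl.
by rewrite big_split /= Ef Er.
Qed.

End Generators.

Section CyclotomicExponents.
Variables (S : pred nat) (A : seq nat) (e : nat -> int).
Hypothesis HS : numerical_semigroup S.
Hypothesis S_proper : exists n, ~~ S n.
Hypothesis HA : min_gen_set S A.
Hypothesis He : cyc_exp_seq S e.

(* n = 0, or n lies <=_S-above some positive j in J. For J included in S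
   this set is contained in S and closed under addition, so it can serve
   as a support for products. *)
Definition above (J : nat -> Prop) (n : nat) : Prop :=
  n = 0%N \/ exists j, [/\ J j, (0 < j <= n)%N & S (n - j)%N].

Section Above.
Variable J : nat -> Prop.
Hypothesis JS : forall j, J j -> S j.

Lemma above_mem n : above J n -> S n.
Proof.
case=> [->|[j [Jj /andP[_ jn] Snj]]]; first exact: (S0 HS).
by rewrite -(subnKC jn); apply: (SD HS) => //; apply: JS.
Qed.

Lemma above_addclosed : addclosed (above J).
Proof.
move=> m n [->|[j [Jj /andP[j0 jm] Smj]]] An; first by rewrite add0n.
right; exists j; split => //; first by rewrite j0 (leq_trans jm (leq_addr _ _)).
by rewrite -addnBAC //; apply: (SD HS) => //; apply: above_mem.
Qed.

Lemma above_multiple j n : J j -> (0 < j)%N -> (j %| n)%N -> above J n.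
Proof.
move=> Jj j0 /dvdnP[[|k] ->]; [by left | right; exists j; split => //].
  by rewrite j0 mulSn leq_addr.
by rewrite mulSn addKn; apply: (SM HS); apply: JS.
Qed.

End Above.

(* If h has constant term 1 and h and h * g are supported on S, then so is g:
   this is what makes G = D / H supported on S. *)
Lemma supported_quot N (h g : {poly int}) :
  supported N S h -> h`_0 = 1 -> supported N S (h * g) -> supported N S g.
Proof.
move=> Sh h0 Shg; suff gS n i : (i <= n)%N -> (i <= N)%N -> ~ S i -> g`_i = 0.
  by move=> i iN; apply: contraNT => /negP nSi; apply/eqP; apply: (gS i i).
elim: n i => [|n IH] i in_ iN nSi.
  by case: nSi; move: in_; rewrite leqn0 => /eqP->; exact: (S0 HS).
have := supported_coef0 Shg iN nSi; rewrite coefM big_ord_recl /= subn0 h0 mul1r.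
rewrite big1 ?addr0 // => j _; have := ltn_ord j; rewrite /bump /= add1n => ji.
have [->|hj] := eqVneq h`_j.+1 0; first by rewrite mul0r.
rewrite (IH (i - j.+1)%N) ?mulr0 //; try lia.
move=> Sij; apply: nSi; rewrite -(subnKC ji); apply: (SD HS) => //.
by apply: Sh hj; lia.
Qed.

Definition Hser (N : nat) : {poly int} := poly_of N (hilb S).

Lemma coef_Hser N i : (i <= N)%N -> (Hser N)`_i = Posz (S i).
Proof. by move=> iN; rewrite coef_poly_of iN. Qed.

Lemma supported_Hser N : supported N S (Hser N).
Proof. by move=> i iN; rewrite coef_Hser //; case: (S i). Qed.

Lemma coef0_Hser N : (Hser N)`_0 = 1.
Proof. by rewrite coef_Hser // (S0 HS). Qed.

Lemma supported_Dser N : supported N S (Dser A N).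
Proof.
apply: supported_prod; [exact: (S0 HS) | exact: (SD HS) |] => i _.
have Ai : nth 0%N A i \in A by apply: mem_nth.
have J_S : forall j, j = nth 0%N A i -> S j by move=> j ->; exact: (gen_mem HA).
apply: supported_sub (@supported_geom N N _) => n ndiv.
exact: (above_mem J_S (above_multiple J_S erefl (gen_pos HA Ai) ndiv)).
Qed.

Lemma HG_eq_D N : cut N (Hser N * Gser A e N) = cut N (Dser A N).
Proof. by apply: HGD => //; [exact: gens_uniq HA | exact: gen_pos HA]. Qed.

Lemma supported_Gser N : supported N S (Gser A e N).
Proof.
apply: (supported_quot (@supported_Hser N) (coef0_Hser N)).
by apply: supported_cut (@supported_Dser N); rewrite HG_eq_D.
Qed.

Lemma coef0_Gser N : (Gser A e N)`_0 = 1.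
Proof. by rewrite coef0_prod big_nat_cond big1 // => j /andP[/andP[j0 _] _]; apply: coef0_cpow. Qed.

(* The coefficient of x^a in D is 1 for a generator a: by irreducibility,
   a has a single factorization. *)
Lemma coef_Dser_gen a N : a \in A -> (a <= N)%N -> (Dser A N)`_a = 1.
Proof.
move=> aA aN; have a0 := gen_pos HA aA.
have ia : (index a A < size A)%N by rewrite index_mem.
rewrite /Dser (bigD1 (Ordinal ia)) //= nth_index // mulrC.
set R := \prod_(i < size A | i != Ordinal ia) _.
pose J b := b \in A /\ b != a.
have JS b : J b -> S b by case=> bA _; apply: (gen_mem HA).
have suppR : supported N (above J) R.
  apply: supported_prod; [by left | exact: above_addclosed |] => i ni.
  have iA : nth 0%N A i \in A by apply: mem_nth.
  have nia : nth 0%N A i != a.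
    by rewrite -(nth_index 0%N aA) nth_uniq ?(gens_uniq HA).
  apply: supported_sub (@supported_geom N N _) => n.
  by apply: above_multiple => //; apply: (gen_pos HA).
have R0 : R`_0 = 1.
  by rewrite coef0_prod big1 // => i _; rewrite coef_geom ?dvdn0 //; apply/(gen_pos HA)/mem_nth.
have Ra : R`_a = 0.
  apply: (supported_coef0 suppR aN) => -[a00|[b [[bA ba] /andP[b0 bla] Sab]]]; first lia.
  have bla' : (b < a)%N by rewrite ltn_neqAle ba.
  by apply: (gen_irreducible HA aA (gen_mem HA bA) Sab b0); lia.
by rewrite (coef_mul_multiples _ _ (@supported_geom N N a)) ?a0 // !coef_geom // dvdn0 dvdnn Ra R0.
Qed.

Definition nz (m j : nat) : Prop := (0 < j < m)%N /\ fexp A e j != 0.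

Lemma supported_cyc_prod N m : (forall j, nz m j -> S j) ->
  supported N (above (nz m)) (\prod_(1 <= j < m) cpow N j (- fexp A e j)).
Proof.
move=> nzS; rewrite big_nat_cond.
apply: supported_prod; [by left | exact: above_addclosed |] => j /andP[/andP[j0 jm] _].
have [->|fj] := eqVneq (fexp A e j) 0; first by apply: supported1; left.
apply: supported_sub (@supported_cpow N N j _) => n.
by apply: above_multiple => //; split => //; rewrite j0.
Qed.

Lemma coef_Gser_top n : (0 < n)%N -> (Gser A e n)`_n =
  (\prod_(1 <= j < n) cpow n j (- fexp A e j))`_n + fexp A e n.
Proof.
move=> n0; have Hn : (0 < n <= n)%N by rewrite n0 leqnn.
rewrite /Gser big_nat_recr //= (coef_mul_multiples _ Hn (@supported_cpow n n n _)).
have L0 : (\prod_(1 <= j < n) cpow n j (- fexp A e j))`_0 = 1.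
  rewrite coef0_prod big_nat_cond big1 // => j /andP[/andP[j0 _] _]; exact: coef0_cpow.
by rewrite coef0_cpow // coef_cpow // opprK mulr1 L0 mul1r.
Qed.

Lemma coef_Dser_top n : (0 < n)%N -> S n ->
  (forall k, (0 < k < n)%N -> S k -> (Gser A e n)`_(n - k) = 0) ->
  (Dser A n)`_n = 1 + (Gser A e n)`_n.
Proof.
move=> n0 Sn mixed; move/cutP: (HG_eq_D n) => /(_ n (leqnn n)) <-.
rewrite coef_mul_ends // => [|k /andP[k0 kn]].
  by rewrite coef0_Gser coef0_Hser coef_Hser // Sn mulr1 mul1r.
have [->|Hk] := eqVneq (Hser n)`_k 0; first by rewrite mul0r.
by rewrite mixed ?mulr0 ?k0 //; apply: (supported_Hser (ltnW kn) Hk).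
Qed.

(* By strong induction:
   if j is not in S, then G_j = 0, and so is the contribution of the factors
   below j, which are supported above elements of S; hence f_j = 0. *)
Lemma fexp_nz_mem j : (0 < j)%N -> fexp A e j != 0 -> S j.
Proof.
elim/ltn_ind: j => j IH j0 fj; apply/idPn => /negP nSj.
have nzS i : nz j i -> S i by case=> /andP[i0 ij] fi; apply: IH.
have Gj := supported_coef0 (@supported_Gser j) (leqnn j) nSj.
have Lj := supported_coef0 (@supported_cyc_prod j j nzS) (leqnn j)
  (fun a => nSj (above_mem nzS a)).
by move: Gj; rewrite coef_Gser_top // Lj add0r => /eqP; rewrite (negbTE fj).
Qed.

Lemma nz_mem m j : nz m j -> S j.
Proof. by case=> /andP[j0 _]; apply: fexp_nz_mem. Qed.

(* Step 2b: an index j > 0 with f_j <> 0 is not a generator.  Otherwise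
   D_j = 1 forces G_j = 0 (the mixed terms vanish by irreducibility of j),
   and the factors below j do not reach x^j, so f_j = 0. *)
Lemma fexp_nz_notgen j : (0 < j)%N -> fexp A e j != 0 -> j \notin A.
Proof.
move=> j0 fj; apply/negP => jA; have Sj := fexp_nz_mem j0 fj.
have mixed k : (0 < k < j)%N -> S k -> (Gser A e j)`_(j - k) = 0.
  move=> /andP[k0 kj] Sk; apply: (supported_coef0 (@supported_Gser j) (leq_subr _ _)) => Sjk.
  by apply: (gen_irreducible HA jA Sk Sjk k0); lia.
have Gj : (Gser A e j)`_j = 0.
  by apply/(@addrI _ 1); rewrite addr0 -coef_Dser_top // coef_Dser_gen.
have Lj : (\prod_(1 <= i < j) cpow j i (- fexp A e i))`_j = 0.
  apply: (supported_coef0 (@supported_cyc_prod j j (@nz_mem j)) (leqnn j)).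
  case=> [j00|[i [nzi /andP[i0 _] Sji]]]; first lia.
  have /andP[_ ij] := nzi.1.
  by apply: (gen_irreducible HA jA (nz_mem nzi) Sji i0); lia.
by move: Gj; rewrite coef_Gser_top // Lj add0r => /eqP; rewrite (negbTE fj).
Qed.

Lemma fexp_notgen j : j \notin A -> j != 1%N -> fexp A e j = e j.
Proof. by move=> jA j1; rewrite /fexp (negbTE jA) (negbTE j1) addr0 subr0. Qed.

(* Since 1 is not in S, these indices are exactly E(S). *)
Lemma fexp_nz_E j : (0 < j)%N -> fexp A e j != 0 -> in_E A e j.
Proof.
move=> j0 fj; have jA := fexp_nz_notgen j0 fj.
have j1 : j != 1%N by apply: contra_notN (one_notin HS S_proper) => /eqP <-; apply: fexp_nz_mem.
by split; [rewrite ltn_neqAle eq_sym j1 | rewrite -fexp_notgen |].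
Qed.

Lemma fexp_E j : in_E A e j -> fexp A e j = e j.
Proof. by case=> j2 _ jA; apply: fexp_notgen => //; apply: contraTneq j2 => ->. Qed.

Lemma E_mem j : in_E A e j -> S j.
Proof.
move=> Ej; have [j2 ej _] := Ej.
by apply: fexp_nz_mem; [apply: leq_trans j2 | rewrite fexp_E].
Qed.

Lemma minimal_below alpha j : minimal_in_E S A e alpha ->
  (0 < j < alpha)%N -> fexp A e j != 0 -> ~ S (alpha - j)%N.
Proof.
case=> _ Hmin /andP[j0 ja] fj Saj.
by have := Hmin j (fexp_nz_E j0 fj) (conj (ltnW ja) Saj); lia.
Qed.

(* Step 3: at a minimal alpha, the factors below alpha and the mixed terms do
   not reach x^alpha, so d(alpha) = D_alpha = 1 + G_alpha = 1 + e_alpha. *)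
Lemma denumerant_minimal alpha : minimal_in_E S A e alpha ->
  Posz (denumerant A alpha) = 1 + e alpha.
Proof.
move=> Ma; have [Ea _] := Ma; have fa := fexp_E Ea; have [a2 _ _] := Ea.
have a0 : (0 < alpha)%N by apply: leq_trans a2.
have Ga : (Gser A e alpha)`_alpha = e alpha.
  rewrite coef_Gser_top // fa (supported_coef0 (@supported_cyc_prod _ _ (@nz_mem alpha))) ?add0r //.
  case=> [a00|[j [[ja fj] _ Saj]]]; first lia.
  exact: minimal_below Ma ja fj Saj.
rewrite denumerant_coef coef_Dser_top ?Ga ?(E_mem Ea) // => k /andP[k0 ka] Sk.
apply: (supported_coef0 (@supported_cyc_prod alpha alpha.+1 (@nz_mem _)) (leq_subr _ _)).
case=> [ak0|[j [[/andP[j0 _] fj] /andP[_ jak] Sakj]]]; first lia.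
apply: (minimal_below Ma _ fj); first by rewrite j0; lia.
by rewrite (_ : alpha - j = alpha - k - j + k)%N; [apply: (SD HS) | lia].
Qed.

End CyclotomicExponents.

Lemma leS_trans S a b c : numerical_semigroup S -> leS S a b -> leS S b c -> leS S a c.
Proof.
move=> HS [ab Sab] [bc Sbc]; split; first exact: leq_trans bc.
by rewrite (_ : c - a = c - b + (b - a))%N; [apply: (SD HS) | lia].
Qed.

Lemma exists_minimal S A e d : numerical_semigroup S -> in_E A e d ->
  exists2 alpha, minimal_in_E S A e alpha & leS S alpha d.
Proof.
move=> HS; elim/ltn_ind: d => d IH Ed.
have [Hmin|] := classic (forall y, in_E A e y -> leS S y d -> y = d).
  by exists d => //; split; rewrite ?leqnn ?subnn //; apply: (S0 HS).
case/not_all_ex_not => y not_min.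
have [Ey not_min'] := imply_to_and _ _ not_min.
have [yd ny] := imply_to_and _ _ not_min'.
have lt_yd : (y < d)%N by case: yd => yd _; rewrite ltn_neqAle yd andbT; apply/eqP.
have [alpha Ma ay] := IH y lt_yd Ey.
by exists alpha => //; apply: leS_trans ay yd.
Qed.

Theorem lemma4p5 (S : pred nat) (A : seq nat) (e : nat -> int) :
  numerical_semigroup S ->
  (exists n : nat, ~~ S n) ->
  min_gen_set S A ->
  cyc_exp_seq S e ->
  (forall d : nat, in_E A e d -> (2 <= denumerant A d)%N) /\
  (forall alpha : nat, minimal_in_E S A e alpha ->
     e alpha = (denumerant A alpha)%:Z - 1).
Proof.
move=> HS S_proper HA He; split => [d Ed | alpha Ma]; last first.
  by rewrite (denumerant_minimal HS S_proper HA He Ma) addrAC subrr add0r.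
have [alpha Ma [ad Sda]] := exists_minimal HS Ed.
have Da := denumerant_minimal HS S_proper HA He Ma.
have [[_ ea _] _] := Ma.
have Dpos := denumerant_pos HA (E_mem HS HA He Ma.1).
have D2 : (2 <= denumerant A alpha)%N by move: ea; lia.
by apply: leq_trans D2 _; rewrite -(subnKC ad); exact: (denumerant_mono HA alpha Sda).
Qed.
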